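(* Let $0<q<1$, $\beta\in\mathbb{C}$ and $n\ge 0$ an integer, and set $a=q^{-n/2+1/4}\beta$. Let $\tau$ be the divided difference operator acting on polynomials in $x=(z+z^{-1})/2$ by $$(\tau f)(z)=\frac{f(q^{1/2}z)-f(q^{-1/2}z)}{z-z^{-1}} .$$ Then $$\sum_{k=0}^\infty\frac{q^{k^2/4}\beta^k}{(q;q)_k}\,\tau^k\,H_n(x|q)=H_n(x;a|q),$$ where the sum is finite since $\tau$ lowers polynomial degree in $x$.
   Context: $(a;q)_0=1$, $(a;q)_k=\prod_{j=0}^{k-1}(1-aq^j)$, $\begin{bmatrix} n\\ k\end{bmatrix}_q=\frac{(q;q)_n}{(q;q)_k(q;q)_{n-k}}$. With $x=\cos\theta$, $z=e^{i\theta}$, the continuous $q$-Hermite polynomials are $H_n(x|q)=\sum_{k=0}^n\begin{bmatrix} n\\ k\end{bmatrix}_q e^{i(n-2k)\theta}$, and the continuous big $q$-Hermite polynomials are $$H_n(x;a|q)=e^{in\theta}\,{}_2\phi_0\big(q^{-n},ae^{i\theta};-;q;q^ne^{-2i\theta}\big)=e^{in\theta}\sum_{k=0}^n\frac{(q^{-n};q)_k(ae^{i\theta};q)_k}{(q;q)_k}(-1)^kq^{-k(k-1)/2}\big(q^ne^{-2i\theta}\big)^k .$$ *)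

From mathcomp Require Import all_boot all_order all_algebra.
From mathcomp Require Import complex.
From mathcomp Require Import reals.
Set Implicit Arguments. Unset Strict Implicit. Unset Printing Implicit Defensive.
Import Order.TTheory GRing.Theory Num.Theory.
Local Open Scope ring_scope.
Local Open Scope complex_scope.

Section Defs.
Variable R : realType.
Local Notation C := R[i].

Definition qpoch (q a : C) (k : nat) : C := \prod_(j < k) (1 - a * q ^+ j).

Definition qbinom (q : C) (n k : nat) : C :=
  qpoch q q n / (qpoch q q k * qpoch q q (n - k)).

(* continuous q-Hermite H_n(x|q) as a function of z (x = (z + z^-1)/2):
   sum_{k=0}^n [n k]_q z^(n-2k) *)
Definition qHermite (q : C) (n : nat) (z : C) : C :=
  \sum_(k < n.+1) qbinom q n k * (z ^+ (n - k) * z ^- k).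

Definition bigqHermite (q a : C) (n : nat) (z : C) : C :=
  z ^+ n * \sum_(k < n.+1)
    (qpoch q (q ^- n) k * qpoch q (a * z) k / qpoch q q k
      * (-1) ^+ k * q ^- 'C(k, 2) * (q ^+ n * z ^- 2) ^+ k).

(* divided difference operator, with s = q^(1/2):
   (tau f)(z) = (f(s z) - f(s^-1 z)) / (z - z^-1) *)
Definition qtau (s : C) (f : C -> C) : C -> C :=
  fun z => (f (s * z) - f (s^-1 * z)) / (z - z^-1).

End Defs.

From mathcomp Require Import all_boot all_order all_algebra.
From mathcomp Require Import complex.
From mathcomp Require Import reals.
From mathcomp Require Import ring zify.
Import Order.TTheory GRing.Theory Num.Theory.
Set Implicit Arguments. Unset Strict Implicit. Unset Printing Implicit Defensive.
Local Open Scope ring_scope.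
Local Open Scope complex_scope.

(* Write H_n(x|q) = (q;q)_n G_n(z), where
   G_m(z) = sum_k z^(m-2k) / ((q;q)_k (q;q)_(m-k)) is [qHermiteN m].  The q-Pascal
   rule gives tau G_(m+1) = - q^(-(m+1)/2) G_m, so tau^k H_n is an explicit multiple
   of G_(n-k), and it vanishes for k > n.  On the other side, expanding (a z;q)_k by
   the finite q-binomial theorem and exchanging the two summations gives
   H_n(x;a|q) = (q;q)_n sum_j (-1)^j q^(j(j-1)/2) a^j / (q;q)_j G_(n-j)(z); with
   a = q^(-n/2+1/4) beta its coefficients agree with those of the left side. *)

Lemma sum_antidiagonals (V : nmodType) (F : nat -> nat -> V) n :
  \sum_(k < n.+1) \sum_(j < k.+1) F j (k - j)%N
  = \sum_(j < n.+1) \sum_(i < (n - j).+1) F j i.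
Proof.
elim: n => [|n IH]; first by rewrite !big_ord1.
rewrite big_ord_recr /= IH [RHS]big_ord_recr /= subnn big_ord1.
rewrite [X in _ + X = _]big_ord_recr /= subnn addrA; congr (_ + _).
rewrite -big_split /=; apply: eq_bigr => j _.
by rewrite subSn ?[RHS]big_ord_recr // -ltnS.
Qed.

Section QCalculus.
Variables (R : realType) (Q : R[i]).

Lemma qpoch0 a : qpoch Q a 0 = 1.
Proof. by rewrite /qpoch big_ord0. Qed.

Lemma qpochS a k : qpoch Q a k.+1 = qpoch Q a k * (1 - a * Q ^+ k).
Proof. by rewrite /qpoch big_ord_recr. Qed.

Hypothesis QXS_neq1 : forall k, Q ^+ k.+1 != 1.

Lemma subr1QXS_neq0 k : 1 - Q ^+ k.+1 != 0.
Proof. by rewrite subr_eq0 eq_sym. Qed.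

Lemma qpochQ_neq0 k : qpoch Q Q k != 0.
Proof.
elim: k => [|k IH]; first by rewrite qpoch0 oner_neq0.
by rewrite qpochS -exprS mulf_neq0 ?subr1QXS_neq0.
Qed.

Definition qweight m k := (qpoch Q Q k * qpoch Q Q (m - k))^-1.

Lemma qweightS_subr m k :
  (k <= m)%N -> (1 - Q ^+ (m.+1 - k)) * qweight m.+1 k = qweight m k.
Proof.
move=> km; rewrite /qweight subSn // qpochS -exprS.
by field; rewrite subr1QXS_neq0 !qpochQ_neq0.
Qed.

Lemma qweightSS m k : (1 - Q ^+ k.+1) * qweight m.+1 k.+1 = qweight m k.
Proof.
rewrite /qweight subSS qpochS -exprS.
by field; rewrite subr1QXS_neq0 !qpochQ_neq0.
Qed.

Lemma sum_qweightS_subr m (h : nat -> R[i]) :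
  \sum_(k < m.+2) (1 - Q ^+ (m.+1 - k)) * qweight m.+1 k * h k
  = \sum_(k < m.+1) qweight m k * h k.
Proof.
rewrite big_ord_recr /= subnn expr0 subrr !mul0r addr0.
by apply: eq_bigr => k _; rewrite qweightS_subr // -ltnS.
Qed.

Lemma sum_qweightSS m (h : nat -> R[i]) :
  \sum_(k < m.+2) (1 - Q ^+ k) * qweight m.+1 k * h k
  = \sum_(k < m.+1) qweight m k * h k.+1.
Proof.
rewrite big_ord_recl /= expr0 subrr !mul0r add0r.
by apply: eq_bigr => k _; rewrite qweightSS.
Qed.

Lemma qpoch_qbinomial x k :
  qpoch Q x k
  = qpoch Q Q k * \sum_(j < k.+1) qweight k j * ((-1) ^+ j * Q ^+ 'C(j, 2) * x ^+ j).
Proof.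
elim: k => [|k IH].
  by rewrite big_ord1 /qweight !qpoch0 bin0n !expr0 !mulr1 invr1 mul1r.
pose c j := (-1) ^+ j * Q ^+ 'C(j, 2) * x ^+ j.
rewrite qpochS IH qpochS -exprS -!mulrA; congr (_ * _).
have splitQXS (j : 'I_k.+2) : (1 - Q ^+ k.+1) * (qweight k.+1 j * c j)
    = (1 - Q ^+ (k.+1 - j)) * qweight k.+1 j * c j
      + (1 - Q ^+ j) * qweight k.+1 j * (Q ^+ (k.+1 - j) * c j).
  by rewrite -{1}(subnK (ltn_ord j : (j <= k.+1)%N)) exprD; ring.
rewrite mulr_sumr (eq_bigr _ (fun j _ => splitQXS j)) big_split /=.
rewrite sum_qweightS_subr (sum_qweightSS _ (fun j => Q ^+ (k.+1 - j) * c j)).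
rewrite -big_split mulr_suml /=.
apply: eq_bigr => j _; rewrite subSS /c binS bin1 !exprS.
have -> : Q ^+ k = Q ^+ (k - j) * Q ^+ j by rewrite -exprD subnK // -ltnS.
by rewrite exprD; ring.
Qed.

Hypothesis Q_neq0 : Q != 0.

Lemma qpoch_qinvXn n k : (k <= n)%N ->
  qpoch Q (Q ^- n) k * (-1) ^+ k * Q ^- 'C(k, 2) * (Q ^+ n) ^+ k * qpoch Q Q (n - k)
  = qpoch Q Q n.
Proof.
elim: k => [|k IH] kn; first by rewrite qpoch0 subn0 !expr0 invr1 !mulr1 mul1r.
rewrite -[RHS](IH (ltnW kn)) -(subnSK kn) !qpochS binS bin1.
set d := (n - k.+1)%N; have -> : n = (k + d).+1 by rewrite /d -addSn subnKC.
rewrite !exprS !exprD.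
by field; rewrite Q_neq0 !expf_neq0.
Qed.

Definition qHermiteN m w := \sum_(k < m.+1) qweight m k * (w ^+ (m - k) * w ^- k).

Lemma qHermiteE m w : qHermite Q m w = qpoch Q Q m * qHermiteN m w.
Proof.
by rewrite /qHermite /qHermiteN mulr_sumr; apply: eq_bigr => k _; rewrite [RHS]mulrA.
Qed.

Lemma qHermiteN0 w : qHermiteN 0 w = 1.
Proof. by rewrite /qHermiteN big_ord1 /qweight qpoch0 subnn expr0 invr1 !mulr1 invr1. Qed.

Lemma bigqHermiteE a n z : z != 0 ->
  bigqHermite Q a n z = qpoch Q Q n * \sum_(j < n.+1)
    ((-1) ^+ j * Q ^+ 'C(j, 2) * a ^+ j / qpoch Q Q j * qHermiteN (n - j) z).
Proof.
move=> z_neq0.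
pose F j i := qpoch Q Q n * ((-1) ^+ j * Q ^+ 'C(j, 2) * a ^+ j / qpoch Q Q j)
  * (qweight (n - j) i * (z ^+ (n - j - i) * z ^- i)).
transitivity (\sum_(k < n.+1) \sum_(j < k.+1) F j (k - j)%N); last first.
  rewrite sum_antidiagonals mulr_sumr; apply: eq_bigr => j _.
  by rewrite /qHermiteN mulrA mulr_sumr.
rewrite /bigqHermite mulr_sumr; apply: eq_bigr => -[k /= kn] _.
have -> : z ^+ n * (qpoch Q (Q ^- n) k * qpoch Q (a * z) k / qpoch Q Q k * (-1) ^+ k
      * Q ^- 'C(k, 2) * (Q ^+ n * z ^- 2) ^+ k)
    = qpoch Q Q n / qpoch Q Q (n - k) * (z ^+ n * (z ^- 2) ^+ k)
      * (qpoch Q (a * z) k / qpoch Q Q k).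
  rewrite -(@qpoch_qinvXn n k kn) exprMn.
  by field; rewrite !qpochQ_neq0 expf_neq0.
rewrite (qpoch_qbinomial (a * z) k) [_ / qpoch Q Q k]mulrC mulKf ?qpochQ_neq0 //.
rewrite mulr_sumr; apply: eq_bigr => -[j /= jk] _; rewrite /F /qweight.
have [i ki] : exists i, k = (j + i)%N by exists (k - j)%N; lia.
have [r nr] : exists r, n = (k + r)%N by exists (n - k)%N; lia.
rewrite nr ki.
have -> : (j + i - j = i)%N by lia.
have -> : (j + i + r - j - i = r)%N by lia.
have -> : (j + i + r - (j + i) = r)%N by lia.
rewrite exprMn exprVn -exprM mulnC exprM !exprD.
by field; rewrite !qpochQ_neq0 !expf_neq0.
Qed.

Section DividedDifference.
Variable s : R[i].
Hypotheses (s_neq0 : s != 0) (Q_sqr : Q = s ^+ 2).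

(* The points [s^j w] reached by iterating [qtau] then never meet [1] or [-1]. *)
Definition qgeneric w := w != 0 /\ forall m : int, w ^+ 2 != Q ^ m.

Lemma qgeneric_scale w : qgeneric w -> qgeneric (s * w) /\ qgeneric (s^-1 * w).
Proof.
move=> [w_neq0 wQ].
split; split; rewrite ?mulf_neq0 ?invr_eq0 // => m; apply/negP => /eqP E.
  move: (wQ (m - 1)); rewrite expfzDr // -E exprN1 exprMn -Q_sqr.
  by rewrite mulrC mulrA mulVf // mul1r eqxx.
move: (wQ (m + 1)); rewrite expfzDr // -E expr1z exprMn exprVn -Q_sqr.
by rewrite mulrC mulrA mulfV // mul1r eqxx.
Qed.

Lemma qgeneric_subrV w : qgeneric w -> w - w^-1 != 0.
Proof.
move=> [w_neq0 wQ]; rewrite subr_eq0; apply: contra (wQ 0) => /eqP wV.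
by rewrite expr0z expr2 {2}wV mulfV.
Qed.

Lemma qtau_scale c f g w :
  f (s * w) = c * g (s * w) -> f (s^-1 * w) = c * g (s^-1 * w) ->
  qtau s f w = c * qtau s g w.
Proof. by rewrite /qtau => -> ->; rewrite -mulrBr mulrA. Qed.

Lemma qtau_qHermiteN m w :
  w - w^-1 != 0 -> qtau s (qHermiteN m.+1) w = - s ^- m.+1 * qHermiteN m w.
Proof.
move=> wV_neq0.
have w_neq0 : w != 0 by apply: contraNneq wV_neq0 => ->; rewrite invr0 subr0.
rewrite /qtau; suff -> : qHermiteN m.+1 (s * w) - qHermiteN m.+1 (s^-1 * w)
    = - s ^- m.+1 * (w - w^-1) * qHermiteN m w by rewrite mulrAC mulfK.
pose h k := w ^+ (m.+1 - k) * w ^- k.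
have wG : w * qHermiteN m w
    = \sum_(k < m.+2) (1 - Q ^+ (m.+1 - k)) * qweight m.+1 k * h k.
  rewrite sum_qweightS_subr /qHermiteN mulr_sumr; apply: eq_bigr => k _.
  by rewrite /h (subSn (ltn_ord k : (k <= m)%N)) exprS; ring.
have wVG : w^-1 * qHermiteN m w
    = \sum_(k < m.+2) (1 - Q ^+ k) * qweight m.+1 k * h k.
  rewrite sum_qweightSS /qHermiteN mulr_sumr; apply: eq_bigr => k _.
  by rewrite /h subSS exprS; field; rewrite w_neq0 expf_neq0.
rewrite -mulrA mulrBl wG wVG -!sumrB mulr_sumr; apply: eq_bigr => k _.
rewrite /h; set j := (m.+1 - k)%N.
rewrite -[in s ^- m.+1](subnK (ltn_ord k : (k <= m.+1)%N)) -/j.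
rewrite !exprMn !exprVn Q_sqr (exprAC s 2 j) (exprAC s 2 k) exprD.
by field; rewrite !expf_neq0.
Qed.

(* The product of the factors [- s ^- (m - i)], [i < k], of [qtau_qHermiteN]. *)
Definition qtau_coef m k :=
  if (k <= m)%N then (-1) ^+ k * s ^+ 'C(k, 2) / s ^+ (k * m) else 0.

Lemma qtau_coefS m k : (k < m)%N -> qtau_coef m k.+1 = - s ^- (m - k) * qtau_coef m k.
Proof.
move=> km; rewrite /qtau_coef km ltnW // binS bin1 mulSn !exprD.
have -> : s ^+ m = s ^+ (m - k) * s ^+ k by rewrite -exprD subnK // ltnW.
by rewrite exprS; field; rewrite !expf_neq0.
Qed.

Lemma qtau_coef_gt m k : (m < k)%N -> qtau_coef m k = 0.
Proof. by move=> mk; rewrite /qtau_coef leqNgt mk. Qed.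

Lemma iter_qtau_qHermite n k w : qgeneric w ->
  iter k (qtau s) (qHermite Q n) w = qpoch Q Q n * qtau_coef n k * qHermiteN (n - k) w.
Proof.
elim: k w => [|k IH] w gw.
  by rewrite /= qHermiteE /qtau_coef subn0 mul0n !expr0 mulr1 divr1 mulr1.
have [gsw gVw] := qgeneric_scale gw.
rewrite iterS (qtau_scale (c := qpoch Q Q n * qtau_coef n k) (g := qHermiteN (n - k)))
  ?IH //.
case: (ltnP k n) => [kn | nk].
  rewrite -(subnSK kn) qtau_qHermiteN ?qgeneric_subrV // subnSK // qtau_coefS //.
  by ring.
have -> : (n - k = 0)%N by apply/eqP; rewrite subn_eq0.
by rewrite (qtau_coef_gt (k := k.+1)) // /qtau !qHermiteN0 subrr !(mul0r, mulr0).
Qed.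

End DividedDifference.

End QCalculus.

(* With [s = t^2 = q^(1/2)], this is where [a = q^(-n/2+1/4) beta] comes from. *)
Lemma qtau_coef_sqr (R : realType) (t : R[i]) n k : t != 0 -> (k <= n)%N ->
  t ^+ (k ^ 2) * qtau_coef (t ^+ 2) n k
  = (-1) ^+ k * ((t ^+ 2) ^+ 2) ^+ 'C(k, 2) * (t ^ (1 - 2 * n%:Z)) ^+ k.
Proof.
move=> t_neq0 kn; rewrite /qtau_coef kn.
have k_sqr : (k ^ 2 = 'C(k, 2) * 2 + k)%N.
  by elim: (k) => // j IH; rewrite binS bin1; nia.
have -> : t ^ (1 - 2 * n%:Z) = t / t ^+ (2 * n).
  by rewrite expfzDr // expr1z -PoszM -exprnN.
have e1 : (t ^+ 2) ^+ 'C(k, 2) = (t ^+ 'C(k, 2)) ^+ 2 := exprAC _ _ _.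
have e2 : (t ^+ 2) ^+ (k * n) = (t ^+ (k * n)) ^+ 2 := exprAC _ _ _.
have e3 : ((t ^+ 2) ^+ 2) ^+ 'C(k, 2) = (t ^+ 'C(k, 2)) ^+ 4.
  by rewrite -!exprM; congr (_ ^+ _); lia.
have e4 : (t ^+ (2 * n)) ^+ k = (t ^+ (k * n)) ^+ 2.
  by rewrite -!exprM; congr (_ ^+ _); lia.
rewrite e1 e2 e3 [(t / _) ^+ k]exprMn exprVn e4 k_sqr exprD exprM.
by field; rewrite !expf_neq0.
Qed.

Theorem mainTheorem4 (R : realType) (q : R) (beta : R[i]) (n : nat)
  (hq0 : 0 < q) (hq1 : q < 1) (N : nat) (hN : (n < N)%N)
  (z : R[i]) (hz0 : z != 0) (hz : forall m : int, z ^+ 2 != (q%:C) ^ m) :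
  \sum_(k < N)
     ((Num.sqrt (Num.sqrt q))%:C ^+ (k ^ 2) * beta ^+ k / qpoch q%:C q%:C k
       * iter k (qtau (Num.sqrt q)%:C) (qHermite q%:C n) z)
  = bigqHermite q%:C ((Num.sqrt (Num.sqrt q))%:C ^ (1 - 2 * n%:Z) * beta) n z.
Proof.
set t := (Num.sqrt (Num.sqrt q))%:C; set s := (Num.sqrt q)%:C; set Q := q%:C.
have s_sqr : s = t ^+ 2 by rewrite -rmorphXn sqr_sqrtr // sqrtr_ge0.
have Q_sqr : Q = s ^+ 2 by rewrite -rmorphXn sqr_sqrtr // ltW.
have Q_neq0 : Q != 0 by rewrite fmorph_eq0 gt_eqF.
have s_neq0 : s != 0 by apply: contraNneq Q_neq0 => s0; rewrite Q_sqr s0 expr0n.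
have t_neq0 : t != 0 by apply: contraNneq s_neq0 => t0; rewrite s_sqr t0 expr0n.
have QXS_neq1 k : Q ^+ k.+1 != 1.
  rewrite -rmorphXn -(rmorph1 (real_complex R)) (inj_eq (fmorph_inj _)).
  by rewrite lt_eqF // exprn_ilt1 // ltW.
have z_generic : qgeneric Q z by split.
rewrite (bigqHermiteE QXS_neq1 Q_neq0 _ _ hz0) mulr_sumr -(subnKC hN) big_split_ord.
rewrite [X in _ + X = _]big1 ?addr0 => [|k _]; last first.
  rewrite (iter_qtau_qHermite QXS_neq1 Q_neq0 s_neq0 Q_sqr) //.
  by rewrite qtau_coef_gt ?(mulr0, mul0r) //= ltn_addr.
apply: eq_bigr => k _ /=; rewrite (iter_qtau_qHermite QXS_neq1 Q_neq0 s_neq0 Q_sqr) //.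
have -> : (-1) ^+ k * Q ^+ 'C(k, 2) * (t ^ (1 - 2 * n%:Z) * beta) ^+ k
    = t ^+ (k ^ 2) * qtau_coef s n k * beta ^+ k.
  by rewrite exprMn mulrA Q_sqr s_sqr qtau_coef_sqr // -ltnS.
by ring.
Qed.
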